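(* Let $\mathcal A_+,\mathcal A_-\subseteq\mathbb Z^n$ be disjoint finite sets such that $(\mathcal A_+,\mathcal A_-)$ is full dimensional and nonseparable, with critical system $F$. Let $\mathcal A=\mathcal A_+\cup\mathcal A_-$, $c\in\mathbb R^{\mathcal A}_{>0}$, and $h:\mathcal A\to\mathbb Z$ a height function lifting $\mathcal A_-$, and set $G(t,x):=F(c\star t^h,x)$ for $(t,x)\in\mathbb R^{n+1}_{>0}$. If $G(t,x)=0$ for some $(t,x)\in\mathbb R^{n+1}_{>0}$, then the Jacobian matrix $J_G(t,x)$ (with respect to $(t,x)$) satisfies $\det J_G(t,x)\neq0$. In particular, for $f\in\mathcal S(\mathcal A_+,\mathcal A_-)$ with nonsigned coefficients $c$, the unique element $t_*$ of $S=\{t>0:G(t,x)=0\text{ for some }x\in\mathbb R^n_{>0}\}$ together with the corresponding $x$ is a nonsingular solution of $G=0$.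
   Context: For $c\in\mathbb R^{\mathcal A}_{>0}$ let $f_c(x)=\sum_{a\in\mathcal A_+}c_ax^a-\sum_{b\in\mathcal A_-}c_bx^b$; $\mathcal S(\mathcal A_+,\mathcal A_-)$ is the set of these. The critical system is $F(c,x)=(f_c(x),x_1\partial_{x_1}f_c(x),\dots,x_n\partial_{x_n}f_c(x))$. Full dimensional: $\dim\operatorname{conv}(\mathcal A)=n$. $\mathcal F(\mathcal A_+)$ is the common refinement of all regular polyhedral subdivisions of $\mathcal A_+$, $\mathcal F_n(\mathcal A_+)$ its $n$-cells; $(\mathcal A_+,\mathcal A_-)$ is nonseparable if $\mathcal A_-\subseteq\operatorname{relint}\operatorname{conv}(\mathcal A_+)$ and some $D\in\mathcal F_n(\mathcal A_+)$ contains $\mathcal A_-$. A height function $h$ lifts $\mathcal A_-$ if $h(a)>0$ for $a\in\mathcal A_-$ and $h(a)=0$ for $a\in\mathcal A_+$; $c\star t^h=(c_at^{h(a)})_a$. (For nonempty $\mathcal A_-$ under these hypotheses, $S$ is known to be a singleton.) *)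

From HB Require Import structures.
From mathcomp Require Import all_boot all_order all_algebra.
From mathcomp Require Import finmap.
From mathcomp Require Import all_classical all_reals all_analysis.
Set Implicit Arguments. Unset Strict Implicit. Unset Printing Implicit Defensive.
Import Order.TTheory GRing.Theory Num.Theory.
Import numFieldNormedType.Exports.
Local Open Scope ring_scope.
Local Open Scope fset_scope.

Section Defs.
Variables (R : realType) (n : nat).

Definition rvR (p : 'rV[int]_n) : 'rV[R]_n := map_mx (fun z : int => z%:~R) p.

Definition dotR (a : 'rV[R]_n) (p : 'rV[int]_n) : R := \sum_(i < n) a 0 i * (p 0 i)%:~R.

Definition conv (S : {fset 'rV[int]_n}) : set 'rV[R]_n :=
  fun q => exists lam : 'rV[int]_n -> R,
     (forall p, p \in S -> 0 <= lam p) /\ \sum_(p <- S) lam p = 1 /\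
     q = \sum_(p <- S) lam p *: rvR p.

Definition aff (S : {fset 'rV[int]_n}) : set 'rV[R]_n :=
  fun q => exists lam : 'rV[int]_n -> R,
     \sum_(p <- S) lam p = 1 /\ q = \sum_(p <- S) lam p *: rvR p.

Definition relint_conv (S : {fset 'rV[int]_n}) : set 'rV[R]_n :=
  fun q => conv S q /\ exists2 e : R, 0 < e &
     forall r, aff S r -> `|r - q| < e -> conv S r.

Definition dim_full (D : set 'rV[R]_n) : Prop :=
  exists q0 (q : 'I_n -> 'rV[R]_n), D q0 /\ (forall i, D (q i)) /\
    \det (\matrix_(i < n, j < n) (q i - q0) 0 j) != 0.

Definition full_dimensional (A : {fset 'rV[int]_n}) : Prop :=
  dim_full (conv A).

(* C is a cell of the regular polyhedral subdivision of A induced by the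
   height w : A -> R: the projection of a lower face of the lifted
   configuration {(p, w p)}. *)
Definition regular_cell (A : {fset 'rV[int]_n}) (w : 'rV[int]_n -> R)
  (C : set 'rV[R]_n) : Prop :=
  exists (a : 'rV[R]_n) (b : R),
    (forall p, p \in A -> (dotR a p + b <= w p)%R) /\
    C = conv [fset p in A | (w p == dotR a p + b)%R].

(* D is a cell of F(A): the common refinement of all regular subdivisions
   of A, i.e. a nonempty intersection of one cell of each regular
   subdivision. *)
Definition refinement_cell (A : {fset 'rV[int]_n}) (D : set 'rV[R]_n) : Prop :=
  (exists q, D q) /\
  exists sel : ('rV[int]_n -> R) -> set 'rV[R]_n,
    (forall w, regular_cell A w (sel w)) /\
    D = (fun q => forall w, sel w q).

Definition refinement_ncell (A : {fset 'rV[int]_n}) (D : set 'rV[R]_n) : Prop :=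
  refinement_cell A D /\ dim_full D.

Definition nonseparable (Ap Am : {fset 'rV[int]_n}) : Prop :=
  (forall b, b \in Am -> relint_conv Ap (rvR b)) /\
  exists D, refinement_ncell Ap D /\ (forall b, b \in Am -> D (rvR b)).

Definition lifts (Ap Am : {fset 'rV[int]_n}) (h : 'rV[int]_n -> int) : Prop :=
  (forall a, a \in Am -> (0 < h a)%R) /\ (forall a, a \in Ap -> h a = 0).

Definition mono (x : 'rV[R]_n) (a : 'rV[int]_n) : R := \prod_(i < n) x 0 i ^ a 0 i.

Definition fpoly (Ap Am : {fset 'rV[int]_n}) (c : 'rV[int]_n -> R) (x : 'rV[R]_n) : R :=
  \sum_(a <- Ap) c a * mono x a - \sum_(b <- Am) c b * mono x b.

Definition xdfpoly (Ap Am : {fset 'rV[int]_n}) (c : 'rV[int]_n -> R) (i : 'I_n)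
  (x : 'rV[R]_n) : R :=
  \sum_(a <- Ap) c a * (a 0 i)%:~R * mono x a
  - \sum_(b <- Am) c b * (b 0 i)%:~R * mono x b.

Definition crit (Ap Am : {fset 'rV[int]_n}) (c : 'rV[int]_n -> R) (x : 'rV[R]_n)
  : 'rV[R]_(n.+1) :=
  \row_(k < n.+1) match unlift ord0 k with
                  | None => fpoly Ap Am c x
                  | Some i => xdfpoly Ap Am c i x
                  end.

Definition cstar (c : 'rV[int]_n -> R) (h : 'rV[int]_n -> int) (t : R) :
  'rV[int]_n -> R := fun a => c a * t ^ h a.

(* a point (t, x) of R^{n+1} is encoded as z with t = z 0 0 and
   x_i = z 0 (lift 0 i) *)
Definition xpart (z : 'rV[R]_(n.+1)) : 'rV[R]_n := \row_(i < n) z 0 (lift ord0 i).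

Definition Gsys (Ap Am : {fset 'rV[int]_n}) (c : 'rV[int]_n -> R)
  (h : 'rV[int]_n -> int) (z : 'rV[R]_(n.+1)) : 'rV[R]_(n.+1) :=
  crit Ap Am (cstar c h (z 0 ord0)) (xpart z).

End Defs.

(* At a zero (t, x) of G put T_q = c_q t^(h q) x^q > 0. The equations G = 0
   say that Ap and Am, weighted by T, have the same mass and the same
   barycenter. Hence the column of the Jacobian belonging to f vanishes except
   for df/dt = -(sum_(b in Am) h b T_b) / t < 0, and the complementary minor is
   diag(1/x) times the signed second-moment matrix
   M = sum_(Ap) T_q q q^T - sum_(Am) T_q q q^T.
   M is positive definite: for u <> 0 lift Ap by the height w = <u, .>^2.
   Nonseparability puts Am in a cell of the induced regular subdivision, whose
   affine function l satisfies l <= w on Ap and, w being convex, w <= l on Am.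
   As affine functions are balanced, u^T M u is a sum of nonnegative gaps
   T (w - l) on Ap and T (l - w) on Am, which all vanish only if w = l there;
   a point of Am in the relative interior of conv Ap then forces <u, .> to be
   constant on Ap and Am, contradicting full dimensionality. *)

From Pilot Require Import Defs.
From HB Require Import structures.
From mathcomp Require Import all_boot all_order all_algebra.
From mathcomp Require Import finmap.
From mathcomp Require Import all_classical all_reals all_analysis.
From mathcomp Require Import ring lra.
Set Implicit Arguments. Unset Strict Implicit. Unset Printing Implicit Defensive.
Import Order.TTheory GRing.Theory Num.Theory.
Import numFieldNormedType.Exports.
Local Open Scope ring_scope.

Section LaurentMonomials.
Variables (R : realType) (m : nat).
Implicit Types (y z v : 'rV[R]_m).

Lemma is_derive_coord z v k : is_derive z v (fun y => y 0 k) (v 0 k).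
Proof.
have @f : {linear 'rV[R]_m -> R}.
  by exists (fun N : 'rV[R]_m => N 0 k); do 2![eexists]; do ?[constructor];
     rewrite ?mxE// => ? *; rewrite ?mxE//; move=> ?; rewrite !mxE.
have -> : (fun y : 'rV[R]_m => y 0 k) = f by [].
apply: DeriveDef; first exact/diff_derivable/linear_differentiable/coord_continuous.
rewrite deriveE; last exact/linear_differentiable/coord_continuous.
by rewrite diff_lin //; exact: coord_continuous.
Qed.

Lemma differentiable_exprz_coord z k (e : int) : 0 < z 0 k ->
  differentiable (fun y => y 0 k ^ e) z.
Proof.
move=> zk; case: e => [[|n]|n].
- rewrite (_ : (fun _ => _) = cst 1); first exact: differentiable_cst.
  by apply/funext => y; rewrite expr0z.
- rewrite (_ : (fun _ => _) = (fun y => y 0 k) ^+ n.+1).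
    exact/differentiableX/differentiable_coord.
  by apply/funext => y; rewrite exprfctE.
- rewrite (_ : (fun _ => _) = (fun y => (((fun y => y 0 k) ^+ n.+1) y)^-1)).
    apply: differentiableV; first exact/differentiableX/differentiable_coord.
    by rewrite exprfctE expf_neq0 // gt_eqF.
  by apply/funext => y; rewrite exprfctE.
Qed.

Lemma is_derive_exprz_coord z v k (e : int) : 0 < z 0 k ->
  is_derive z v (fun y => y 0 k ^ e) (z 0 k ^ e * (e%:~R * v 0 k / z 0 k)).
Proof.
move=> zk; have zk0 : z 0 k != 0 by rewrite gt_eqF.
have dk := is_derive_coord z v k.
case: e => n.
  rewrite (_ : (fun _ => _) = (fun y => y 0 k) ^+ n); last first.
    by apply/funext => y; rewrite exprfctE.
  apply: is_derive_eq; case: n => [|n]; first by rewrite !mul0r mulr0 scale0r.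
  rewrite /= exprSz -exprnP -pmulrn [_ *: _]/=.
  have zkn : z 0 k ^+ n != 0 by rewrite expf_neq0.
  by rewrite -[(_ *: v 0 k)]/(_ * v 0 k); field.
rewrite (_ : (fun _ => _) = (fun y => (((fun y => y 0 k) ^+ n.+1) y)^-1)); last first.
  by apply/funext => y; rewrite exprfctE.
have zkn1 : ((fun y => y 0 k) ^+ n.+1) z != 0 by rewrite exprfctE expf_neq0.
apply: DeriveDef; first exact: derivableV.
rewrite deriveV // derive_val exprfctE /=.
have zkn : z 0 k ^+ n != 0 by rewrite expf_neq0.
have -> : ((Negz n)%:~R : R) = - (n.+1)%:R by rewrite NegzE mulrNz -pmulrn.
rewrite -[z 0 k ^ Negz n]/((z 0 k ^+ n.+1)^-1).
rewrite -[(_ *: v 0 k)]/(_ * v 0 k) -[(_ *: (_ * v 0 k))]/(_ * (_ * v 0 k)).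
by rewrite expr2 exprS; field; rewrite zk0 zkn.
Qed.

Section BigOps.
Variables (I : Type) (s : seq I) (F : I -> 'rV[R]_m -> R) (z v : 'rV[R]_m).

Lemma is_derive_sum_seq (dF : I -> R) :
  (forall i, is_derive z v (F i) (dF i)) ->
  is_derive z v (fun y => \sum_(i <- s) F i y) (\sum_(i <- s) dF i).
Proof.
move=> dFi; elim: s => [|i s' IH].
  rewrite big_nil (_ : (fun _ => _) = cst 0); first exact: is_derive_cst.
  by apply/funext => y; rewrite big_nil.
rewrite big_cons (_ : (fun _ => _) = F i + (fun y => \sum_(i <- s') F i y)).
  exact: is_deriveD.
by apply/funext => y; rewrite big_cons.
Qed.

Lemma differentiable_sum_seq :
  (forall i, differentiable (F i) z) ->
  differentiable (fun y => \sum_(i <- s) F i y) z.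
Proof.
move=> dFi; elim: s => [|i s' IH].
  rewrite (_ : (fun _ => _) = cst 0); first exact: differentiable_cst.
  by apply/funext => y; rewrite big_nil.
rewrite (_ : (fun _ => _) = F i + (fun y => \sum_(i <- s') F i y)).
  exact: differentiableD.
by apply/funext => y; rewrite big_cons.
Qed.

Lemma is_derive_prod_seq (r : I -> R) :
  (forall i, is_derive z v (F i) (F i z * r i)) ->
  is_derive z v (fun y => \prod_(i <- s) F i y)
    (\prod_(i <- s) F i z * \sum_(i <- s) r i).
Proof.
move=> dFi; elim: s => [|i s' IH].
  rewrite big_nil (_ : (fun _ => _) = cst 1).
    by rewrite big_nil mulr0; exact: is_derive_cst.
  by apply/funext => y; rewrite big_nil.
rewrite (_ : (fun _ => _) = F i * (fun y => \prod_(i <- s') F i y)); last first.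
  by apply/funext => y; rewrite big_cons.
apply: is_derive_eq; rewrite !big_cons /=.
rewrite -[(F i z *: _)]/(F i z * _) -[(_ *: (F i z * r i))]/(_ * (F i z * r i)).
ring.
Qed.

Lemma differentiable_prod_seq :
  (forall i, differentiable (F i) z) ->
  differentiable (fun y => \prod_(i <- s) F i y) z.
Proof.
move=> dFi; elim: s => [|i s' IH].
  rewrite (_ : (fun _ => _) = cst 1); first exact: differentiable_cst.
  by apply/funext => y; rewrite big_nil.
rewrite (_ : (fun _ => _) = F i * (fun y => \prod_(i <- s') F i y)).
  exact: differentiableM.
by apply/funext => y; rewrite big_cons.
Qed.

End BigOps.

Definition laurent (e : 'I_m -> int) y : R := \prod_(k < m) y 0 k ^ e k.

Variables (z : 'rV[R]_m) (e : 'I_m -> int).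
Hypothesis z_gt0 : forall k, 0 < z 0 k.

Lemma laurent_gt0 : 0 < laurent e z.
Proof. by apply: prodr_gt0 => k _; exact: exprz_gt0. Qed.

Lemma differentiable_laurent : differentiable (laurent e) z.
Proof. by apply: differentiable_prod_seq => k; exact: differentiable_exprz_coord. Qed.

Lemma is_derive_laurent v :
  is_derive z v (laurent e) (laurent e z * \sum_(k < m) (e k)%:~R * v 0 k / z 0 k).
Proof. by apply: is_derive_prod_seq => k; exact: is_derive_exprz_coord. Qed.

End LaurentMonomials.

Section RowFunctions.
Variables (R : realType) (m p : nat) (f : 'rV[R]_m -> 'rV[R]_p) (z : 'rV[R]_m).

Lemma differentiable_rV : (forall j, differentiable (fun y => f y 0 j) z) ->
  differentiable f z.
Proof.
move=> df; rewrite (_ : f = \sum_(j < p) (fun y => f y 0 j *: delta_mx 0 j)).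
  by apply: differentiable_sum => j; exact: differentiableZl.
apply/funext => y; rewrite fct_sumE; apply/rowP => j.
rewrite summxE (bigD1 j) //= big1 ?addr0; first by rewrite !mxE !eqxx mulr1.
by move=> i ij; rewrite !mxE eq_sym (negbTE ij) andbF mulr0.
Qed.

Lemma jacobian_partial k j : differentiable f z ->
  jacobian f z k j = 'D_(delta_mx 0 k) (fun y => f y 0 j) z.
Proof.
move=> df; have -> : jacobian f z k j = row k (jacobian f z) 0 j by rewrite [RHS]mxE.
rewrite rowE -deriveEjacobian // derive_mx ?mxE //; exact: diff_derivable.
Qed.

End RowFunctions.

Definition signed_sum (V : zmodType) (n : nat) (Ap Am : {fset 'rV[int]_n})
  (g : 'rV[int]_n -> V) : V :=
  \sum_(q <- Ap) g q - \sum_(q <- Am) g q.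

Lemma eq_signed_sum (V : zmodType) (n : nat) (Ap Am : {fset 'rV[int]_n})
  (g1 g2 : 'rV[int]_n -> V) : g1 =1 g2 -> signed_sum Ap Am g1 = signed_sum Ap Am g2.
Proof. by move=> /funext ->. Qed.

Section CriticalSystem.
Variables (R : realType) (n : nat) (Ap Am : {fset 'rV[int]_n})
  (c : 'rV[int]_n -> R) (h : 'rV[int]_n -> int).
Implicit Types (q : 'rV[int]_n) (y : 'rV[R]_n.+1).

(* [c q * t ^ h q * x ^ q] is the Laurent monomial with exponent [(h q, q)]
   in the variables [(t, x)]. *)
Definition lift_exp (q : 'rV[int]_n) (k : 'I_n.+1) : int :=
  if unlift ord0 k is Some i then q 0 i else h q.

Definition crit_weight (j : 'I_n.+1) (q : 'rV[int]_n) : R :=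
  if unlift ord0 j is Some i then (q 0 i)%:~R else 1.

Definition crit_term (q : 'rV[int]_n) (y : 'rV[R]_n.+1) : R :=
  c q * laurent (lift_exp q) y.

Lemma crit_termE q y :
  cstar c h (y 0 ord0) q * mono (xpart y) q = crit_term q y.
Proof.
rewrite /cstar /mono /crit_term /laurent big_ord_recl -mulrA.
congr (_ * (_ * _)); first by rewrite /lift_exp unlift_none.
by apply: eq_bigr => i _; rewrite /lift_exp liftK mxE.
Qed.

Lemma GsysE y j : Gsys Ap Am c h y 0 j =
  signed_sum Ap Am (fun q => crit_weight j q * crit_term q y).
Proof.
rewrite /Gsys /crit mxE /signed_sum /crit_weight.
case: (unliftP ord0 j) => [i _|_] /=.
  by congr (_ - _); apply: eq_bigr => q _; rewrite mulrAC crit_termE mulrC.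
by congr (_ - _); apply: eq_bigr => q _; rewrite crit_termE mul1r.
Qed.

Variables (z : 'rV[R]_n.+1) (j : 'I_n.+1).
Hypothesis z_gt0 : forall k, 0 < z 0 k.

Lemma is_derive_Gsys v : is_derive z v (fun y => Gsys Ap Am c h y 0 j)
  (signed_sum Ap Am (fun q => crit_weight j q * (c q * (laurent (lift_exp q) z *
     \sum_(k < n.+1) (lift_exp q k)%:~R * v 0 k / z 0 k)))).
Proof.
under [fun y => _]funext do rewrite GsysE.
by apply: is_deriveB; apply: is_derive_sum_seq => q;
  do 2 apply: is_deriveZ; exact: is_derive_laurent.
Qed.

Lemma differentiable_Gsys : differentiable (Gsys Ap Am c h) z.
Proof.
apply: differentiable_rV => i; under [fun y => _]funext do rewrite GsysE.
by apply: differentiableB; apply: differentiable_sum_seq => q;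
  do 2 apply: differentiableZ; exact: differentiable_laurent.
Qed.

Lemma jacobian_Gsys k : jacobian (Gsys Ap Am c h) z k j =
  signed_sum Ap Am (fun q => crit_weight j q * (lift_exp q k)%:~R * crit_term q z)
  / z 0 k.
Proof.
rewrite jacobian_partial; last exact: differentiable_Gsys.
have [_ ->] := is_derive_Gsys (delta_mx 0 k).
have sum_delta (a : 'I_n.+1 -> R) :
    \sum_(i < n.+1) a i * (delta_mx 0 k : 'rV[R]_n.+1) 0 i / z 0 i = a k / z 0 k.
  rewrite (bigD1 k) //= big1 ?addr0; first by rewrite !mxE !eqxx mulr1.
  by move=> i ik; rewrite !mxE (negbTE ik) andbF mulr0 mul0r.
rewrite /signed_sum mulrBl !mulr_suml.
by congr (_ - _); apply: eq_bigr => q _; rewrite sum_delta /crit_term; ring.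
Qed.

End CriticalSystem.

Lemma sum_fset_natmul_eq1 (K : choiceType) (V : nmodType) (S : {fset K}) a
  (F : K -> V) : a \in S -> \sum_(p <- S) F p *+ (p == a) = F a.
Proof.
move=> aS; rewrite (big_fsetD1 _ aS) /= eqxx mulr1n big_seq big1 ?addr0 //.
by move=> p; rewrite !inE => /andP [/negbTE -> _].
Qed.

Lemma sum_fset_gt0 (R : numDomainType) (K : choiceType) (S : {fset K}) a
  (F : K -> R) : a \in S -> (forall p, p \in S -> 0 < F p) ->
  0 < \sum_(p <- S) F p.
Proof.
move=> aS F_gt0; rewrite (big_fsetD1 _ aS) /= ltr_pwDl ?F_gt0 //.
by rewrite big_seq sumr_ge0 // => p; rewrite !inE => /andP [_ /F_gt0/ltW].
Qed.

Lemma sumr_seq_le0_eq0 (R : numDomainType) (I : eqType) (s : seq I) (F : I -> R) :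
  (forall i, i \in s -> 0 <= F i) -> \sum_(i <- s) F i <= 0 ->
  forall i, i \in s -> F i = 0.
Proof.
move=> F_ge0 sF_le0 i si; have : \sum_(i <- s | i \in s) F i == 0.
  by rewrite -big_seq eq_le sF_le0 big_seq sumr_ge0.
by rewrite psumr_eq0 // => /allP /(_ i si); rewrite si => /eqP.
Qed.

Lemma jensen_sqr (R : realFieldType) (I : eqType) (s : seq I) (lam g : I -> R) :
  (forall i, i \in s -> 0 <= lam i) -> \sum_(i <- s) lam i = 1 ->
  (\sum_(i <- s) lam i * g i) ^+ 2 <= \sum_(i <- s) lam i * g i ^+ 2.
Proof.
move=> lam_ge0 lam1; set mu := \sum_(i <- s) lam i * g i.
have : 0 <= \sum_(i <- s) lam i * (g i - mu) ^+ 2.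
  by rewrite big_seq sumr_ge0 // => i si; rewrite mulr_ge0 ?lam_ge0 ?sqr_ge0.
rewrite (eq_bigr (fun i => lam i * g i ^+ 2 - 2 * mu * (lam i * g i) + mu ^+ 2 * lam i));
  last by move=> i _; ring.
rewrite big_split sumrB -!mulr_sumr /= lam1 -/mu; lra.
Qed.

Section ConvexGeometry.
Variables (R : realType) (n : nat).
Implicit Types (u r : 'rV[R]_n) (p q : 'rV[int]_n) (S : {fset 'rV[int]_n}).

Definition vdot u r : R := \sum_(i < n) u 0 i * r 0 i.

Lemma dotR_vdot u p : dotR u p = vdot u (rvR R p).
Proof. by apply: eq_bigr => i _; rewrite mxE. Qed.

Lemma vdotD u r1 r2 : vdot u (r1 + r2) = vdot u r1 + vdot u r2.
Proof. by rewrite /vdot -big_split; apply: eq_bigr => i _; rewrite mxE mulrDr. Qed.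

Lemma vdotZ u k r : vdot u (k *: r) = k * vdot u r.
Proof. by rewrite /vdot mulr_sumr; apply: eq_bigr => i _; rewrite mxE mulrCA. Qed.

Lemma vdotB u r1 r2 : vdot u (r1 - r2) = vdot u r1 - vdot u r2.
Proof. by rewrite vdotD -scaleN1r vdotZ mulN1r. Qed.

Lemma vdot_comb u (s : seq 'rV[int]_n) (lam : 'rV[int]_n -> R) :
  vdot u (\sum_(p <- s) lam p *: rvR R p) = \sum_(p <- s) lam p * dotR u p.
Proof.
elim: s => [|p s IH]; last by rewrite !big_cons vdotD vdotZ IH dotR_vdot.
by rewrite !big_nil /vdot big1 // => i _; rewrite mxE mulr0.
Qed.

Lemma conv_vdot S u s0 r : Defs.conv S r ->
  (forall p, p \in S -> dotR u p = s0) -> vdot u r = s0.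
Proof.
move=> [lam [_ [lam1 ->]]] uS; rewrite vdot_comb.
rewrite (eq_big_seq (fun p => lam p * s0)) => [|p /uS ->//].
by rewrite -mulr_suml lam1 mul1r.
Qed.

Lemma conv_nonempty S r : Defs.conv S r -> exists p, p \in S.
Proof.
move=> [lam [_ [lam1 _]]]; have [S0|[p pS]] := fset_0Vmem S; last by exists p.
by move: lam1; rewrite S0 big_seq_fset0 => /esym/eqP; rewrite oner_eq0.
Qed.

Lemma conv_sqr_le S u a b0 r :
  (forall p, p \in S -> dotR u p ^+ 2 = dotR a p + b0) ->
  Defs.conv S r -> vdot u r ^+ 2 <= vdot a r + b0.
Proof.
move=> uS [lam [lam_ge0 [lam1 ->]]]; rewrite !vdot_comb.
apply: le_trans (jensen_sqr _ lam_ge0 lam1) _.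
rewrite (eq_big_seq (fun p => lam p * dotR a p + lam p * b0)) => [|p /uS ->];
  last by ring.
by rewrite big_split /= -mulr_suml lam1 mul1r.
Qed.

Lemma relint_conv_extend S b a0 : relint_conv S b -> a0 \in S ->
  exists2 del : R, 0 < del & Defs.conv S (b + del *: (b - rvR R a0)).
Proof.
move=> [[lam [_ [lam1 eb]]] [e e_gt0 relS]] a0S.
set d := `|b - rvR R a0|; have d_ge0 : 0 <= d by exact: normr_ge0.
set del := e / (d + 1); have del_gt0 : 0 < del by rewrite divr_gt0 // ltr_wpDl.
exists del => //; apply: relS.
  exists (fun p => (1 + del) * lam p - del * (p == a0)%:R); split.
    by rewrite sumrB -!mulr_sumr lam1 sum_fset_natmul_eq1 // !mulr1 addrK.
  under eq_bigr do rewrite scalerBl -!scalerA scaler_nat.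
  rewrite sumrB -!scaler_sumr -eb sum_fset_natmul_eq1 //.
  by apply/rowP => i; rewrite !mxE /del; ring.
rewrite addrAC subrr add0r normrZ gtr0_norm // /del -/d.
by rewrite mulrAC ltr_pdivrMr ?ltr_wpDl //; nra.
Qed.

(* Strict convexity of the square along the segment from [p] through [b]. *)
Lemma relint_sqr_affine S u a b0 b :
  relint_conv S (rvR R b) ->
  (forall p, p \in S -> dotR u p ^+ 2 = dotR a p + b0) ->
  dotR u b ^+ 2 = dotR a b + b0 -> forall p, p \in S -> dotR u p = dotR u b.
Proof.
move=> relb uS ub p pS; have [del del_gt0 convr] := relint_conv_extend relb pS.
have := conv_sqr_le uS convr.
rewrite !vdotD !vdotZ !vdotB -!dotR_vdot => le_r; have up := uS p pS.
have : del * (1 + del) * (dotR u b - dotR u p) ^+ 2 <= 0 by nra.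
rewrite pmulr_rle0 ?mulr_gt0 ?addr_gt0 // => sq_le0.
by apply/eqP; rewrite eq_sym -subr_eq0 -sqrf_eq0 eq_le sq_le0 sqr_ge0.
Qed.

Lemma full_dimensional_dotR_const S u s0 : full_dimensional R S ->
  (forall p, p \in S -> dotR u p = s0) -> u = 0.
Proof.
move=> [q0 [q [convq0 [convq det_neq0]]]] uS; apply/eqP.
apply: contraNT det_neq0 => u_neq0; rewrite -det_tr; apply/det0P; exists u => //.
apply/rowP => j; rewrite !mxE.
rewrite (eq_bigr (fun i => u 0 i * (q j - q0) 0 i)) => [|i _]; last by rewrite !mxE.
rewrite -/(vdot u (q j - q0)) vdotB.
by rewrite (conv_vdot (convq j) uS) (conv_vdot convq0 uS) subrr.
Qed.

Lemma nonseparable_cell (Ap Am : {fset 'rV[int]_n}) (w : 'rV[int]_n -> R) :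
  nonseparable R Ap Am -> exists a b0,
    (forall p, p \in Ap -> dotR a p + b0 <= w p) /\
    (forall b, b \in Am ->
       Defs.conv [fset p in Ap | (w p == dotR a p + b0)%R]%fset (rvR R b)).
Proof.
move=> [_ [D [[[_ [sel [sel_cell ->]]] _] AmD]]].
have [a [b0 [l_le_w selw]]] := sel_cell w.
by exists a, b0; split=> // b /AmD /(_ w); rewrite selw.
Qed.

End ConvexGeometry.

Section BalancedWeights.
Variables (R : realType) (n : nat) (Ap Am : {fset 'rV[int]_n}) (T : 'rV[int]_n -> R).
Hypothesis T_gt0 : forall q, q \in (Ap `|` Am)%fset -> 0 < T q.
Hypothesis mass_eq0 : signed_sum Ap Am T = 0.
Hypothesis moment_eq0 : forall i, signed_sum Ap Am (fun q => (q 0 i)%:~R * T q) = 0.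

Lemma signed_sum_affine_eq0 (a : 'rV[R]_n) (b0 : R) :
  signed_sum Ap Am (fun q => (dotR a q + b0) * T q) = 0.
Proof.
have expand (S : {fset 'rV[int]_n}) : \sum_(q <- S) (dotR a q + b0) * T q =
    \sum_(i < n) a 0 i * \sum_(q <- S) (q 0 i)%:~R * T q + b0 * \sum_(q <- S) T q.
  rewrite mulr_sumr; under [\sum_(i < n) _]eq_bigr do rewrite mulr_sumr.
  rewrite exchange_big -big_split; apply: eq_bigr => q _ /=.
  by rewrite mulrDl mulr_suml; congr (_ + _); apply: eq_bigr => i _; rewrite mulrA.
have moment_eq i : \sum_(q <- Ap) (q 0 i)%:~R * T q = \sum_(q <- Am) (q 0 i)%:~R * T q.
  by apply/eqP; rewrite -subr_eq0; apply/eqP; exact: moment_eq0.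
have mass_eq : \sum_(q <- Ap) T q = \sum_(q <- Am) T q.
  by apply/eqP; rewrite -subr_eq0; apply/eqP.
rewrite /signed_sum !expand mass_eq.
by under eq_bigr => i _ do rewrite moment_eq; rewrite subrr.
Qed.

Lemma balanced_mem : full_dimensional R (Ap `|` Am)%fset -> exists b, b \in Am.
Proof.
move=> [q0 [_ [/conv_nonempty [p pA] _]]].
have [Am0|[b bAm]] := fset_0Vmem Am; last by exists b.
move: pA mass_eq0; rewrite Am0 fsetU0 /signed_sum big_seq_fset0 subr0 => pAp Ap0.
suff : 0 < \sum_(q <- Ap) T q by rewrite Ap0 ltxx.
by apply: (sum_fset_gt0 pAp) => q qAp; apply: T_gt0; rewrite Am0 fsetU0.
Qed.

Lemma balanced_sandwich (w l : 'rV[int]_n -> R) :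
  (forall p, p \in Ap -> l p <= w p) -> (forall p, p \in Am -> w p <= l p) ->
  signed_sum Ap Am (fun q => l q * T q) = 0 ->
  signed_sum Ap Am (fun q => w q * T q) <= 0 ->
  forall p, p \in (Ap `|` Am)%fset -> w p = l p.
Proof.
move=> l_le_w w_le_l l_eq0 w_le0.
have gapAp p : p \in Ap -> 0 <= (w p - l p) * T p.
  by move=> pAp; rewrite mulr_ge0 ?subr_ge0 ?l_le_w // ltW // T_gt0 // in_fsetU pAp.
have gapAm p : p \in Am -> 0 <= (l p - w p) * T p.
  by move=> pAm; rewrite mulr_ge0 ?subr_ge0 ?w_le_l // ltW // T_gt0 // in_fsetU pAm orbT.
set X := \sum_(q <- Ap) (w q - l q) * T q; set Y := \sum_(q <- Am) (l q - w q) * T q.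
have XY : X + Y =
    signed_sum Ap Am (fun q => w q * T q) - signed_sum Ap Am (fun q => l q * T q).
  rewrite /X /Y /signed_sum (eq_bigr (fun q => w q * T q - l q * T q)) => [|q _];
    last by ring.
  rewrite [X in _ + X](eq_bigr (fun q => l q * T q - w q * T q)) => [|q _]; last by ring.
  by rewrite !sumrB; ring.
have X_ge0 : 0 <= X by rewrite /X big_seq sumr_ge0.
have Y_ge0 : 0 <= Y by rewrite /Y big_seq sumr_ge0.
have gap_eq0 (S : {fset 'rV[int]_n}) (G : 'rV[int]_n -> R) :
    (forall p, p \in S -> 0 <= G p * T p) -> \sum_(q <- S) G q * T q <= 0 ->
    forall p, p \in S -> p \in (Ap `|` Am)%fset -> G p = 0.
  move=> G_ge0 sG_le0 p pS pA; have /eqP := sumr_seq_le0_eq0 G_ge0 sG_le0 pS.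
  by rewrite mulf_eq0 (gt_eqF (T_gt0 pA)) orbF => /eqP.
move=> p pA; apply/eqP; rewrite -subr_eq0; apply/eqP.
move: (pA); rewrite in_fsetU => /orP [pAp|pAm].
  by apply: (gap_eq0 Ap (fun q => w q - l q)) => //; rewrite -/X; lra.
rewrite -opprB; apply/eqP; rewrite oppr_eq0; apply/eqP.
by apply: (gap_eq0 Am (fun q => l q - w q)) => //; rewrite -/Y; lra.
Qed.

Lemma nonseparable_balance_sqr_gt0 (u : 'rV[R]_n) :
  full_dimensional R (Ap `|` Am)%fset -> nonseparable R Ap Am -> u != 0 ->
  0 < signed_sum Ap Am (fun q => dotR u q ^+ 2 * T q).
Proof.
move=> FD NS u_neq0; have [b bAm] := balanced_mem FD.
pose w q := dotR u q ^+ 2.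
have [a [b0 [l_le_w cellAm]]] := nonseparable_cell w NS.
have w_le_l q : q \in Am -> w q <= dotR a q + b0.
  move=> /cellAm /(conv_sqr_le (u := u) (a := a) (b0 := b0)); rewrite -!dotR_vdot; apply.
  by move=> p; rewrite !inE => /andP [_ /eqP].
rewrite ltNge; apply/negP => w_le0.
have w_eq_l := balanced_sandwich l_le_w w_le_l (signed_sum_affine_eq0 a b0) w_le0.
have u_const p : p \in Ap -> dotR u p = dotR u b.
  apply: (relint_sqr_affine (NS.1 b bAm)) => [q qAp|].
    by apply: w_eq_l; rewrite in_fsetU qAp.
  by apply: w_eq_l; rewrite in_fsetU bAm orbT.
move/negP: u_neq0; apply; apply/eqP.
apply: (full_dimensional_dotR_const (s0 := dotR u b) FD) => p.
rewrite in_fsetU => /orP [/u_const //|pAm].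
by rewrite [LHS]dotR_vdot (conv_vdot (NS.1 p pAm).1 u_const).
Qed.

End BalancedWeights.

Section MomentMatrix.
Variables (R : realType) (n : nat) (Ap Am : {fset 'rV[int]_n}) (T : 'rV[int]_n -> R).

Definition moment_mx : 'M[R]_n :=
  signed_sum Ap Am (fun q => T q *: ((rvR R q)^T *m rvR R q)).

Lemma moment_mxE l m : moment_mx l m =
  signed_sum Ap Am (fun q => (q 0 l)%:~R * (q 0 m)%:~R * T q).
Proof.
rewrite /moment_mx /signed_sum !mxE !summxE.
by congr (_ - _); apply: eq_bigr => q _; rewrite !mxE big_ord1 !mxE mulrC.
Qed.

Lemma moment_mx_form (u : 'rV[R]_n) :
  (u *m moment_mx *m u^T) 0 0 = signed_sum Ap Am (fun q => dotR u q ^+ 2 * T q).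
Proof.
have rank_one_form q : (u *m (T q *: ((rvR R q)^T *m rvR R q)) *m u^T) 0 0 =
    dotR u q ^+ 2 * T q.
  rewrite -scalemxAr -scalemxAl mxE mulrC; set r := rvR R q.
  have -> : u *m (r^T *m r) *m u^T = (u *m r^T) *m (r *m u^T) by rewrite !mulmxA.
  rewrite mxE big_ord1 expr2 dotR_vdot !mxE.
  by congr (_ * _ * _); apply: eq_bigr => i _; rewrite !mxE // mulrC.
rewrite /moment_mx /signed_sum mulmxBr mulmxBl !mulmx_sumr !mulmx_suml !mxE !summxE.
by congr (_ - _); apply: eq_bigr => q _; rewrite rank_one_form.
Qed.

End MomentMatrix.

Lemma det_neq0_posdef (R : realFieldType) (n : nat) (M : 'M[R]_n) :
  (forall u : 'rV[R]_n, u != 0 -> 0 < (u *m M *m u^T) 0 0) -> \det M != 0.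
Proof.
move=> M_posdef; apply/negP => /det0P [u u_neq0 uM0].
by move: (M_posdef u u_neq0); rewrite uM0 mul0mx mxE ltxx.
Qed.

Section CriticalPoint.
Variables (R : realType) (n : nat) (Ap Am : {fset 'rV[int]_n})
  (c : 'rV[int]_n -> R) (h : 'rV[int]_n -> int) (z : 'rV[R]_n.+1).
Hypothesis c_gt0 : forall q, q \in (Ap `|` Am)%fset -> 0 < c q.
Hypothesis z_gt0 : forall k, 0 < z 0 k.
Hypothesis Gz : Gsys Ap Am c h z = 0.

Local Notation T := (fun q => crit_term c h q z).
Local Notation J := (jacobian (Gsys Ap Am c h) z).

Lemma crit_term_gt0 q : q \in (Ap `|` Am)%fset -> 0 < T q.
Proof. by move=> qA; rewrite mulr_gt0 ?c_gt0 ?laurent_gt0. Qed.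

Lemma Gsys_eq0_mass : signed_sum Ap Am T = 0.
Proof.
transitivity (Gsys Ap Am c h z 0 ord0); last by rewrite Gz mxE.
by rewrite GsysE; apply: eq_signed_sum => q; rewrite /crit_weight unlift_none mul1r.
Qed.

Lemma Gsys_eq0_moment i : signed_sum Ap Am (fun q => (q 0 i)%:~R * T q) = 0.
Proof.
transitivity (Gsys Ap Am c h z 0 (lift ord0 i)); last by rewrite Gz mxE.
by rewrite GsysE; apply: eq_signed_sum => q; rewrite /crit_weight liftK.
Qed.

(* Euler's relation: [x_i d/dx_i f] is itself a component of the system. *)
Lemma jacobian_Gsys_col0 i : J (lift ord0 i) ord0 = 0.
Proof.
rewrite jacobian_Gsys // -(mul0r (z 0 (lift ord0 i))^-1) -(Gsys_eq0_moment i).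
congr (_ * _); apply: eq_signed_sum => q.
by rewrite /crit_weight /lift_exp unlift_none liftK mul1r.
Qed.

Lemma jacobian_Gsys00 : lifts Ap Am h -> (exists b, b \in Am) -> J ord0 ord0 != 0.
Proof.
move=> [h_Am h_Ap] [b bAm].
rewrite jacobian_Gsys // mulf_neq0 ?invr_eq0 ?(gt_eqF (z_gt0 _)) //.
rewrite /signed_sum big_seq big1 => [|q qAp]; last first.
  by rewrite /lift_exp unlift_none h_Ap // mulr0 mul0r.
rewrite sub0r oppr_eq0 gt_eqF // (sum_fset_gt0 bAm) // => q qAm.
rewrite /crit_weight /lift_exp unlift_none mul1r mulr_gt0 ?ltr0z ?h_Am //.
by apply: crit_term_gt0; rewrite in_fsetU qAm orbT.
Qed.

Lemma jacobian_Gsys_minor : row' ord0 (col' ord0 J) =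
  diag_mx (\row_l (z 0 (lift ord0 l))^-1) *m moment_mx Ap Am T.
Proof.
apply/matrixP => l m.
have -> : row' ord0 (col' ord0 J) l m = J (lift ord0 l) (lift ord0 m).
  by rewrite [LHS]mxE [LHS]mxE.
rewrite jacobian_Gsys // mul_diag_mx mxE moment_mxE mxE mulrC.
congr (_ * _); apply: eq_signed_sum => q.
by rewrite /crit_weight /lift_exp !liftK [_%:~R * _%:~R]mulrC.
Qed.

End CriticalPoint.

Local Open Scope fset_scope.

Theorem proposition4p4 (R : realType) (n : nat)
  (Ap Am : {fset 'rV[int]_n}) (c : 'rV[int]_n -> R) (h : 'rV[int]_n -> int) :
  [disjoint Ap & Am] ->
  full_dimensional R (Ap `|` Am) ->
  nonseparable R Ap Am ->
  (forall a, a \in Ap `|` Am -> 0 < c a) ->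
  lifts Ap Am h ->
  forall z : 'rV[R]_(n.+1), (forall k, 0 < z 0 k) ->
    Gsys Ap Am c h z = 0 ->
    \det (jacobian (Gsys Ap Am c h) z) != 0.
Proof.
move=> _ FD NS c_gt0 lift_h z z_gt0 Gz.
have T_gt0 := crit_term_gt0 h c_gt0 z_gt0.
have mass0 := Gsys_eq0_mass Gz; have moment0 := Gsys_eq0_moment Gz.
have Am_mem := balanced_mem T_gt0 mass0 FD.
rewrite (expand_det_col _ ord0) big_ord_recl big1 => [|i _]; last first.
  by rewrite jacobian_Gsys_col0 ?mul0r.
rewrite addr0 /cofactor /= expr0 mul1r jacobian_Gsys_minor // det_mulmx det_diag.
rewrite !mulf_neq0 ?jacobian_Gsys00 //.
  by apply/prodf_neq0 => l _; rewrite mxE invr_eq0 gt_eqF.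
apply: det_neq0_posdef => u u_neq0; rewrite moment_mx_form.
exact: nonseparable_balance_sqr_gt0 T_gt0 mass0 moment0 u FD NS u_neq0.
Qed.
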